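(* Let $\mu\in(0,1/2]$. For every $(g_0,c_0)\in S$ there exists a smooth function $f:\mathbb R\to\mathbb R$ with $f(g_0)=c_0$ such that $$\frac{d}{dg}\Big|_{g=g_0}R_S(g,f(g))\neq0,$$ where $R_S(g,c)=2\sqrt{\frac{\sqrt{1-gc}}{g-c+2\sqrt{(1-2\mu)^2-gc}}}\,\frac{K(r_2)}{K(k_1)}$.
   Context: $c_J=-1-2\sqrt{\mu(1-\mu)}$, $c_h=-1+2\mu$. The region $S$ in the $(g,c)$-plane is $S=\{c<c_J,\ -c-2<g<-c-2(1-2\mu)\}\cup\{c_J\le c<c_h,\ (1-2\mu)^2/c<g<-c-2(1-2\mu)\}$. $K(k)=\frac{\pi}{2}\sum_{n\ge0}\big(\frac{(2n-1)!!}{(2n)!!}\big)^2k^{2n}$ is the complete elliptic integral of the first kind, $k_1^2=\frac12\big(1-\frac{g-c}{2\sqrt{1-gc}}\big)$, $r_2^2=\frac{g-c-2\sqrt{(1-2\mu)^2-gc}}{g-c+2\sqrt{(1-2\mu)^2-gc}}$. $R_S$ is the rotation function (ratio of $\eta$- to $\xi$-period) of the Euler problem with mass ratio $\mu$ in the region $S$. *)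

From Stdlib Require Import Arith Factorial Reals Lra ClassicalEpsilon.
Open Scope R_scope.

Definition cJ (mu : R) : R := -1 - 2 * sqrt (mu * (1 - mu)).
Definition ch (mu : R) : R := -1 + 2 * mu.

Definition inS (mu g c : R) : Prop :=
  (c < cJ mu /\ - c - 2 < g /\ g < - c - 2 * (1 - 2 * mu)) \/
  (cJ mu <= c /\ c < ch mu /\ (1 - 2 * mu) ^ 2 / c < g /\ g < - c - 2 * (1 - 2 * mu)).

(* ((2n-1)!!/(2n)!!) = (2n)! / (2^n n!)^2 *)
Definition Kcoef (n : nat) : R :=
  (INR (fact (2 * n)) / (2 ^ n * INR (fact n)) ^ 2) ^ 2.

Definition series_sum (a : nat -> R) : R :=
  epsilon (inhabits 0) (fun l => Un_cv (fun N => sum_f_R0 a N) l).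

(* Complete elliptic integral of the first kind, by its power series *)
Definition K (k : R) : R :=
  PI / 2 * series_sum (fun n => Kcoef n * k ^ (2 * n)).

Definition k1 (g c : R) : R :=
  sqrt (/ 2 * (1 - (g - c) / (2 * sqrt (1 - g * c)))).

Definition r2 (mu g c : R) : R :=
  sqrt ((g - c - 2 * sqrt ((1 - 2 * mu) ^ 2 - g * c)) /
        (g - c + 2 * sqrt ((1 - 2 * mu) ^ 2 - g * c))).

Definition RS (mu g c : R) : R :=
  2 * sqrt (sqrt (1 - g * c) / (g - c + 2 * sqrt ((1 - 2 * mu) ^ 2 - g * c)))
    * (K (r2 mu g c) / K (k1 g c)).

Fixpoint Cn (n : nat) (f : R -> R) : Prop :=
  match n with
  | O => continuity f
  | S m => exists f' : R -> R,
      (forall x, derivable_pt_lim f x (f' x)) /\ Cn m f'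
  end.

Definition smooth (f : R -> R) : Prop := forall n, Cn n f.

From Stdlib Require Import Factorial Reals Lra Lia Psatz FunctionalExtensionality ClassicalEpsilon.
From Coquelicot Require Import Coquelicot.
Open Scope R_scope.

(* In the coordinates a = g - c, b = g c one has k1^2 = (1 - a / (2 sqrt (1 - b))) / 2, and
   R_S depends on (g, c) only through (a, b).  Along the direction (a, -2 (1 - b)) of the
   (a, b)-plane the ratio a / sqrt (1 - b) is stationary, so K(k1) does not move, while both
   the prefactor sqrt (sqrt (1 - b) / (a + 2 sqrt (M - b))), with M = (1 - 2 mu)^2, and r2
   strictly decrease; since K is increasing on [0, 1), R_S strictly decreases in that
   direction.  A straight line through (g0, c0) whose image in the (a, b)-plane has that
   tangent direction does the job. *)

Lemma fact_double_le n : INR (fact (2 * n)) <= (2 ^ n * INR (fact n)) ^ 2.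
Proof.
  induction n as [|n IH]; [simpl; lra|].
  replace (2 * S n)%nat with (S (S (2 * n))) by lia.
  change (fact (S (S (2 * n)))) with (S (S (2 * n)) * (S (2 * n) * fact (2 * n)))%nat.
  change (fact (S n)) with (S n * fact n)%nat.
  rewrite !mult_INR, !S_INR, mult_INR; simpl (2 ^ S n).
  replace (INR 2) with 2 by (simpl; lra).
  replace ((2 * 2 ^ n * ((INR n + 1) * INR (fact n))) ^ 2)
    with (4 * (INR n + 1) ^ 2 * (2 ^ n * INR (fact n)) ^ 2) by ring.
  assert (0 <= INR n) by apply pos_INR.
  assert (0 <= INR (fact (2 * n))) by apply pos_INR.
  assert (0 <= (2 * INR n + 2) * (2 * INR n + 1) <= 4 * (INR n + 1) ^ 2) by nra.
  nra.
Qed.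

Lemma Kcoef_bounds n : 0 <= Kcoef n <= 1.
Proof.
  unfold Kcoef.
  assert (Hnum : 0 < INR (fact (2 * n))) by apply lt_0_INR, lt_O_fact.
  assert (Hden : 0 < (2 ^ n * INR (fact n)) ^ 2).
  { apply pow_lt, Rmult_lt_0_compat; [apply pow_lt; lra | apply lt_0_INR, lt_O_fact]. }
  pose proof (fact_double_le n) as Hle.
  set (den := (2 ^ n * INR (fact n)) ^ 2) in *.
  assert (Hq : 0 <= INR (fact (2 * n)) / den <= 1).
  { split; [apply Rlt_le, Rdiv_lt_0_compat; lra|].
    assert (INR (fact (2 * n)) / den * den = INR (fact (2 * n))) by (field; lra).
    nra. }
  split; nra.
Qed.

Lemma Kcoef_0 : Kcoef 0 = 1.
Proof. unfold Kcoef; simpl; field. Qed.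

Lemma CV_radius_Kcoef y : Rabs y < 1 -> Rbar_lt (Rabs y) (CV_radius Kcoef).
Proof.
  intros Hy.
  apply Rbar_lt_le_trans with 1; [exact Hy|].
  apply (proj1 (CV_radius_bounded Kcoef)).
  exists 1; intros n.
  rewrite pow1, Rmult_1_r, Rabs_right by apply Rle_ge, Kcoef_bounds.
  apply Kcoef_bounds.
Qed.

Lemma series_sum_eq a l : Un_cv (fun N => sum_f_R0 a N) l -> series_sum a = l.
Proof.
  intros H; unfold series_sum.
  apply (UL_sequence (fun N => sum_f_R0 a N)); [|exact H].
  exact (epsilon_spec (inhabits 0) _ (ex_intro _ l H)).
Qed.

Definition K_series : R -> R := PSeries Kcoef.

Lemma K_sqrt y : 0 <= y < 1 -> K (sqrt y) = PI / 2 * K_series y.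
Proof.
  intros Hy; unfold K, K_series; f_equal.
  rewrite (functional_extensionality (fun n => Kcoef n * sqrt y ^ (2 * n))
             (fun n => Kcoef n * y ^ n))
    by (intros n; rewrite pow_mult, pow2_sqrt by lra; reflexivity).
  apply series_sum_eq, is_series_Reals, Series_correct, ex_series_Rabs, CV_disk_inside.
  apply CV_radius_Kcoef; rewrite Rabs_right; lra.
Qed.

Lemma PSeries_nonneg a x :
  (forall n, 0 <= a n) -> 0 <= x -> ex_pseries a x -> 0 <= PSeries a x.
Proof.
  intros Ha Hx Hex; unfold PSeries.
  rewrite <- (Rmult_0_l (Series (fun k => a k * x ^ k))), <- Series_scal_l.
  apply Series_le; [|exact (proj1 (ex_pseries_R a x) Hex)].
  intros n; assert (0 <= a n * x ^ n) by (apply Rmult_le_pos; [apply Ha | apply pow_le; lra]).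
  lra.
Qed.

Lemma K_series_ge_1 y : 0 <= y < 1 -> 1 <= K_series y.
Proof.
  intros Hy.
  assert (Hr : Rbar_lt (Rabs y) (CV_radius Kcoef)) by (apply CV_radius_Kcoef; rewrite Rabs_right; lra).
  unfold K_series; rewrite PSeries_decr_1, Kcoef_0 by (apply CV_radius_inside, Hr).
  assert (0 <= PSeries (PS_decr_1 Kcoef) y); [|nra].
  apply PSeries_nonneg; [intros n; apply Kcoef_bounds | lra |].
  apply CV_radius_inside; rewrite CV_radius_decr_1; exact Hr.
Qed.

Lemma is_derive_K_series y :
  Rabs y < 1 -> is_derive K_series y (PSeries (PS_derive Kcoef) y).
Proof. intros Hy; apply is_derive_PSeries, CV_radius_Kcoef, Hy. Qed.

Lemma Derive_K_series_nonneg y : 0 <= y < 1 -> 0 <= Derive K_series y.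
Proof.
  intros Hy.
  assert (Hy' : Rabs y < 1) by (rewrite Rabs_right; lra).
  rewrite (is_derive_unique _ _ _ (is_derive_K_series y Hy')).
  apply PSeries_nonneg; [|lra|apply ex_pseries_derive, CV_radius_Kcoef, Hy'].
  intros n; unfold PS_derive.
  apply Rmult_le_pos; [apply pos_INR | apply Kcoef_bounds].
Qed.

(* [k1 g c = sqrt (kmod2 (g - c) (g * c))] and [r2 mu g c = sqrt (rmod2 M (g - c) (g * c))]
   with [M = (1 - 2 mu)^2], by conversion. *)
Definition kmod2 (a b : R) : R := / 2 * (1 - a / (2 * sqrt (1 - b))).

Lemma locally_between (h : R -> R) x lo hi :
  continuous h x -> lo < h x < hi -> locally x (fun u => lo < h u < hi).
Proof. intros Hc Hx; exact (Hc _ (open_and _ _ (open_gt lo) (open_lt hi) (h x) Hx)). Qed.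

Section Rotation.

Variable M : R.

Definition rmod2 (a b : R) : R := (a - 2 * sqrt (M - b)) / (a + 2 * sqrt (M - b)).

Definition rot (a b : R) : R :=
  2 * sqrt (sqrt (1 - b) / (a + 2 * sqrt (M - b)))
    * (K_series (rmod2 a b) / K_series (kmod2 a b)).

Definition admissible (a b : R) : Prop :=
  b < M < 1 /\ 0 < rmod2 a b < 1 /\ 0 < kmod2 a b < 1.

Lemma admissible_bounds a b : admissible a b ->
  0 < sqrt (M - b) < sqrt (1 - b) /\ 2 * sqrt (M - b) < a < 2 * sqrt (1 - b).
Proof.
  intros (HbM & [Hr0 Hr1] & [Hk0 Hk1]); unfold rmod2, kmod2 in *.
  set (s := sqrt (M - b)) in *; set (w := sqrt (1 - b)) in *.
  assert (Hs : 0 < s) by (apply sqrt_lt_R0; lra).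
  assert (Hsw : s < w) by (apply sqrt_lt_1; lra).
  assert (Haw : a / (2 * w) * (2 * w) = a) by (field; lra).
  destruct (Rtotal_order (a + 2 * s) 0) as [Hneg | [Hzero | Hpos]].
  - assert (Hq : (a - 2 * s) / (a + 2 * s) * (a + 2 * s) = a - 2 * s) by (field; lra).
    nra.
  - rewrite Hzero, Rdiv_0_r in Hr0; lra.
  - assert (Hq : (a - 2 * s) / (a + 2 * s) * (a + 2 * s) = a - 2 * s) by (field; lra).
    repeat split; nra.
Qed.

Lemma admissible_intro a b : 0 <= M < 1 -> b < M -> 0 < a ->
  4 * (M - b) < a ^ 2 < 4 * (1 - b) -> admissible a b.
Proof.
  intros HM Hb Ha [Hlo Hhi]; unfold admissible, rmod2, kmod2.
  assert (Hs : 0 < sqrt (M - b)) by (apply sqrt_lt_R0; lra).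
  assert (Hss := sqrt_sqrt (M - b) ltac:(lra)).
  assert (Hww := sqrt_sqrt (1 - b) ltac:(lra)).
  set (s := sqrt (M - b)) in *; set (w := sqrt (1 - b)) in *.
  assert (Hw : 0 < w) by (apply sqrt_lt_R0; lra).
  assert (Has : 2 * s < a) by nra.
  assert (Haw : a < 2 * w) by nra.
  assert (Hq : (a - 2 * s) / (a + 2 * s) * (a + 2 * s) = a - 2 * s) by (field; lra).
  assert (Hk : a / (2 * w) * (2 * w) = a) by (field; lra).
  repeat split; try lra; nra.
Qed.

Definition rot_dir (a b da db : R) : R :=
  let w := sqrt (1 - b) in
  let s := sqrt (M - b) in
  let P := sqrt (w / (a + 2 * s)) in
  let dw := - db / (2 * w) in
  let ds := - db / (2 * s) in
  let dP := (dw * (a + 2 * s) - w * (da + 2 * ds)) / ((a + 2 * s) ^ 2 * (2 * P)) in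
  let dk := - (da * w - a * dw) / (4 * w ^ 2) in
  let dr := 4 * (da * s - a * ds) / (a + 2 * s) ^ 2 in
  let Kk := K_series (kmod2 a b) in
  let Kr := K_series (rmod2 a b) in
  2 * (dP * Kr / Kk
       + P * (Derive K_series (rmod2 a b) * dr * Kk - Kr * Derive K_series (kmod2 a b) * dk)
             / Kk ^ 2).

Lemma rot_dir_scale a b l da db : admissible a b ->
  rot_dir a b (l * da) (l * db) = l * rot_dir a b da db.
Proof.
  intros Hadm; destruct (admissible_bounds a b Hadm) as [[Hs Hsw] [Has Haw]].
  destruct Hadm as (_ & [Hr0 Hr1] & [Hk0 Hk1]).
  assert (HP : 0 < sqrt (sqrt (1 - b) / (a + 2 * sqrt (M - b)))).
  { apply sqrt_lt_R0, Rdiv_lt_0_compat; lra. }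
  assert (1 <= K_series (kmod2 a b)) by (apply K_series_ge_1; lra).
  unfold rot_dir; field; repeat split; lra.
Qed.

Lemma rot_dir_neg a b : admissible a b -> rot_dir a b a (-2 * (1 - b)) < 0.
Proof.
  intros Hadm; destruct (admissible_bounds a b Hadm) as [[Hs Hsw] [Has Haw]].
  destruct Hadm as (HbM & [Hr0 Hr1] & [Hk0 Hk1]).
  assert (Hw : 0 < sqrt (1 - b)) by lra.
  assert (Hww : sqrt (1 - b) * sqrt (1 - b) = 1 - b) by (apply sqrt_sqrt; lra).
  assert (HP : 0 < sqrt (sqrt (1 - b) / (a + 2 * sqrt (M - b)))).
  { apply sqrt_lt_R0, Rdiv_lt_0_compat; lra. }
  assert (HKk := K_series_ge_1 (kmod2 a b) ltac:(lra)).
  assert (HKr := K_series_ge_1 (rmod2 a b) ltac:(lra)).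
  assert (HdKr := Derive_K_series_nonneg (rmod2 a b) ltac:(lra)).
  unfold rot_dir; cbv zeta.
  set (w := sqrt (1 - b)) in *; set (s := sqrt (M - b)) in *.
  set (P := sqrt (w / (a + 2 * s))) in *.
  set (Kk := K_series (kmod2 a b)) in *; set (Kr := K_series (rmod2 a b)) in *.
  rewrite <- Hww.
  (* the derivative of kmod2 vanishes in this direction *)
  replace (- (a * w - a * (- (-2 * (w * w)) / (2 * w))) / (4 * w ^ 2)) with 0 by (field; lra).
  set (c := (s * s - w * w) / (s * (a + 2 * s) ^ 2)).
  assert (Hc : c < 0).
  { unfold c, Rdiv; apply Rmult_neg_pos; [nra | apply Rinv_0_lt_compat, Rmult_lt_0_compat; nra]. }
  replace ((- (-2 * (w * w)) / (2 * w) * (a + 2 * s) - w * (a + 2 * (- (-2 * (w * w)) / (2 * s))))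
           / ((a + 2 * s) ^ 2 * (2 * P))) with (c * w / P) by (unfold c; field; lra).
  replace (4 * (a * s - a * (- (-2 * (w * w)) / (2 * s))) / (a + 2 * s) ^ 2) with (4 * a * c)
    by (unfold c; field; lra).
  replace (2 * (c * w / P * Kr / Kk
                + P * (Derive K_series (rmod2 a b) * (4 * a * c) * Kk
                       - Kr * Derive K_series (kmod2 a b) * 0) / Kk ^ 2))
    with (2 * c * (w * Kr / (P * Kk) + 4 * a * P * Derive K_series (rmod2 a b) / Kk))
    by (field; lra).
  assert (0 < w * Kr / (P * Kk)) by (apply Rdiv_lt_0_compat; nra).
  assert (0 <= 4 * a * P * Derive K_series (rmod2 a b) / Kk).
  { apply Rmult_le_pos; [|apply Rlt_le, Rinv_0_lt_compat; lra].
    apply Rmult_le_pos; [|exact HdKr]; nra. }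
  nra.
Qed.

Lemma is_derive_rot_path (A B : R -> R) t da db :
  is_derive A t da -> is_derive B t db -> admissible (A t) (B t) ->
  is_derive (fun u => rot (A u) (B u)) t (rot_dir (A t) (B t) da db).
Proof.
  intros HA HB Hadm.
  destruct (admissible_bounds _ _ Hadm) as [[Hs Hsw] [Has Haw]].
  destruct Hadm as (HbM & [Hr0 Hr1] & [Hk0 Hk1]).
  assert (HKk := K_series_ge_1 (kmod2 (A t) (B t)) ltac:(lra)).
  assert (HP : 0 < sqrt (1 - B t) / (A t + 2 * sqrt (M - B t))) by (apply Rdiv_lt_0_compat; lra).
  assert (HP' : 0 < sqrt (sqrt (1 - B t) / (A t + 2 * sqrt (M - B t)))) by (apply sqrt_lt_R0, HP).
  assert (HdK : forall y, 0 < y < 1 -> ex_derive K_series y).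
  { intros y Hy; eexists; apply is_derive_K_series; rewrite Rabs_right; lra. }
  unfold rot, rmod2, kmod2; auto_derive;
    change (/ 2 * (1 + - (A t * / (2 * sqrt (1 + - B t))))) with (kmod2 (A t) (B t));
    change ((A t + - (2 * sqrt (M + - B t))) * / (A t + 2 * sqrt (M + - B t)))
      with (rmod2 (A t) (B t));
    change (1 + - B t) with (1 - B t); change (M + - B t) with (M - B t).
  - repeat split; try (eexists; eassumption); try (apply HdK; split; assumption); lra.
  - replace (Derive (fun x : R => A x) t) with da by (symmetry; apply is_derive_unique, HA).
    replace (Derive (fun x : R => B x) t) with db by (symmetry; apply is_derive_unique, HB).
    unfold rot_dir; cbv zeta.
    change (sqrt (1 - B t) * / (A t + 2 * sqrt (M - B t)))
      with (sqrt (1 - B t) / (A t + 2 * sqrt (M - B t))).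
    change (Derive (fun x : R => K_series x)) with (Derive K_series).
    field; repeat split; lra.
Qed.

Lemma admissible_locally (A B : R -> R) t :
  ex_derive A t -> ex_derive B t -> admissible (A t) (B t) ->
  locally t (fun u => admissible (A u) (B u)).
Proof.
  intros HA HB Hadm.
  destruct (admissible_bounds _ _ Hadm) as [[Hs Hsw] [Has Haw]].
  destruct Hadm as (HbM & Hr & Hk).
  assert (HcB : continuous B t) by (apply (@ex_derive_continuous R_AbsRing R_NormedModule), HB).
  assert (Hcr : continuous (fun u => rmod2 (A u) (B u)) t).
  { apply (@ex_derive_continuous R_AbsRing R_NormedModule); unfold rmod2; auto_derive.
    repeat split; try assumption; change (M + - B t) with (M - B t); lra. }
  assert (Hck : continuous (fun u => kmod2 (A u) (B u)) t).
  { apply (@ex_derive_continuous R_AbsRing R_NormedModule); unfold kmod2; auto_derive.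
    repeat split; try assumption; change (1 + - B t) with (1 - B t); lra. }
  apply (filter_imp (fun u : R => B t - 1 < B u < M /\ 0 < rmod2 (A u) (B u) < 1
                                  /\ 0 < kmod2 (A u) (B u) < 1)).
  { intros u (HBu & Hru & Hku); repeat split; tauto || lra. }
  apply filter_and; [|apply filter_and].
  - exact (locally_between B t (B t - 1) M HcB ltac:(lra)).
  - exact (locally_between _ t 0 1 Hcr Hr).
  - exact (locally_between _ t 0 1 Hck Hk).
Qed.
End Rotation.

Lemma RS_rot mu g c : admissible ((1 - 2 * mu) ^ 2) (g - c) (g * c) ->
  RS mu g c = rot ((1 - 2 * mu) ^ 2) (g - c) (g * c).
Proof.
  intros (_ & [Hr0 Hr1] & [Hk0 Hk1]).
  assert (HKk := K_series_ge_1 (kmod2 (g - c) (g * c)) ltac:(lra)).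
  assert (HPI := PI_RGT_0).
  unfold RS.
  change (r2 mu g c) with (sqrt (rmod2 ((1 - 2 * mu) ^ 2) (g - c) (g * c))).
  change (k1 g c) with (sqrt (kmod2 (g - c) (g * c))).
  rewrite !K_sqrt by lra.
  unfold rot; field; lra.
Qed.

Lemma is_derive_RS_path mu (f : R -> R) g0 v :
  is_derive f g0 v -> admissible ((1 - 2 * mu) ^ 2) (g0 - f g0) (g0 * f g0) ->
  is_derive (fun g => RS mu g (f g)) g0
    (rot_dir ((1 - 2 * mu) ^ 2) (g0 - f g0) (g0 * f g0) (1 - v) (f g0 + g0 * v)).
Proof.
  intros Hf Hadm.
  assert (HA : is_derive (fun g => g - f g) g0 (1 - v)).
  { auto_derive; [exists v; exact Hf|].
    replace (Derive (fun x : R => f x) g0) with v by (symmetry; apply is_derive_unique, Hf).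
    ring. }
  assert (HB : is_derive (fun g => g * f g) g0 (f g0 + g0 * v)).
  { auto_derive; [exists v; exact Hf|].
    replace (Derive (fun x : R => f x) g0) with v by (symmetry; apply is_derive_unique, Hf).
    ring. }
  apply is_derive_ext_loc with (fun g => rot ((1 - 2 * mu) ^ 2) (g - f g) (g * f g)).
  - apply (filter_imp (fun g => admissible ((1 - 2 * mu) ^ 2) (g - f g) (g * f g))).
    + intros g Hg; symmetry; apply RS_rot, Hg.
    + apply (admissible_locally _ (fun g => g - f g) (fun g => g * f g));
        [exists (1 - v) | exists (f g0 + g0 * v) |]; assumption.
  - apply (is_derive_rot_path _ (fun g => g - f g) (fun g => g * f g)); assumption.
Qed.

Lemma inS_bounds mu g c : 0 < mu <= 1 / 2 -> inS mu g c ->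
  c < g /\ g * c < (1 - 2 * mu) ^ 2 /\ -2 < g + c < -2 * (1 - 2 * mu).
Proof.
  intros Hmu HS; unfold inS, cJ, ch in HS.
  set (r := sqrt (mu * (1 - mu))) in HS.
  assert (Hr0 : 0 <= r) by apply sqrt_pos.
  assert (Hrr : r * r = mu * (1 - mu)) by (apply sqrt_sqrt; nra).
  assert (Hmur : mu <= r) by nra.
  destruct HS as [(Hc & Hg1 & Hg2) | (Hc1 & Hc2 & Hg1 & Hg2)].
  - assert ((c + 1) * (c + 1) > 4 * (r * r)) by nra.
    repeat split; nra.
  - assert (Hc0 : c < 0) by lra.
    assert (Hgc : g * c < (1 - 2 * mu) ^ 2).
    { assert ((1 - 2 * mu) ^ 2 / c * c = (1 - 2 * mu) ^ 2) by (field; lra). nra. }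
    assert (c * c > (1 - 2 * mu) ^ 2) by nra.
    assert ((c + 1) * (c + 1) <= 4 * (r * r)) by nra.
    repeat split; nra.
Qed.

Lemma inS_admissible mu g c : 0 < mu <= 1 / 2 -> inS mu g c ->
  admissible ((1 - 2 * mu) ^ 2) (g - c) (g * c).
Proof.
  intros Hmu HS; destruct (inS_bounds mu g c Hmu HS) as (Hcg & Hgc & Hsum).
  assert (Hsq : (g - c) ^ 2 = (g + c) ^ 2 - 4 * (g * c)) by ring.
  assert (4 * (1 - 2 * mu) ^ 2 < (g + c) ^ 2) by nra.
  apply admissible_intro; rewrite ?Hsq; nra.
Qed.

Lemma Cn_const n k : Cn n (fun _ => k).
Proof.
  revert k; induction n as [|n IH]; intros k; simpl.
  - apply continuity_const; intros x y; reflexivity.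
  - exists (fun _ => 0); split; [intros x; apply derivable_pt_lim_const | apply IH].
Qed.

Lemma smooth_affine c0 v g0 : smooth (fun g => c0 + v * (g - g0)).
Proof.
  intros [|n]; simpl.
  - intros x; apply derivable_continuous_pt, ex_derive_Reals_0; auto_derive; auto.
  - exists (fun _ => v); split; [|apply Cn_const].
    intros x; apply is_derive_Reals; auto_derive; auto; ring.
Qed.

Theorem mainTheorem6 (mu : R) (Hmu : 0 < mu <= 1 / 2) (g0 c0 : R)
  (HS : inS mu g0 c0) :
  exists f : R -> R, smooth f /\ f g0 = c0 /\
    exists l : R, derivable_pt_lim (fun g => RS mu g (f g)) g0 l /\ l <> 0.
Proof.
  destruct (inS_bounds mu g0 c0 Hmu HS) as (Hcg & _ & Hsum).
  assert (Hadm := inS_admissible mu g0 c0 Hmu HS).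
  set (M := (1 - 2 * mu) ^ 2) in *.
  (* slope v making the velocity (1 - v, c0 + g0 v) of (g - f g, g f g) at g0 equal to
     lam (g0 - c0, -2 (1 - g0 c0)) with lam > 0 *)
  set (den := 2 - g0 * (g0 + c0)).
  assert (Hden : 0 < den) by (unfold den; nra).
  set (lam := - (g0 + c0) / den).
  assert (Hlam : 0 < lam) by (apply Rdiv_lt_0_compat; lra).
  set (v := 1 - lam * (g0 - c0)).
  set (f := fun g => c0 + v * (g - g0)).
  assert (Hf0 : f g0 = c0) by (unfold f; ring).
  assert (Hfd : is_derive f g0 v) by (unfold f; auto_derive; auto; ring).
  assert (Hd := is_derive_RS_path mu f g0 v Hfd ltac:(rewrite Hf0; exact Hadm)).
  rewrite Hf0 in Hd; fold M in Hd.
  replace (1 - v) with (lam * (g0 - c0)) in Hd by (unfold v; ring).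
  assert (Hlam_den : lam * den = - (g0 + c0)) by (unfold lam; field; lra).
  replace (c0 + g0 * v) with (lam * (-2 * (1 - g0 * c0))) in Hd by (unfold v, den in *; lra).
  rewrite rot_dir_scale in Hd by exact Hadm.
  exists f; split; [apply smooth_affine | split; [exact Hf0 |]].
  eexists; split; [apply is_derive_Reals, Hd |].
  assert (Hneg := rot_dir_neg M _ _ Hadm); nra.
Qed.
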